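(* Let $H$ be a near-quadrangulation and let $G$ be the patch extension of $H$. If a viable 4-coloring $\varphi$ of the boundary of the outer face of $G$ extends to a 4-coloring of $G$, then $\varphi$ is null-homotopic on the cycle $C$ bounding the outer face of $G$.
   Context: A near-quadrangulation is a 2-connected plane graph all of whose faces other than the outer one have length four (it is bipartite). The patch extension of a 2-connected bipartite plane graph $B$ is the hued plane graph obtained by adding into each non-outer face of $B$ a new vertex adjacent to all vertices on the boundary of that face; the vertices of $B$ get hues $0$ and $1$ according to the bipartition and the new vertices get hue $2$. Hues are values in $\mathbb{Z}_3$; a 4-coloring is a proper coloring with colors in $\mathbb{Z}_2^2$; for a hued graph $K$ and 4-coloring $\varphi$, $K^\varphi$ is the graph with both hue and color. Homomorphisms to $\mathbf{T}$ map adjacent vertices to adjacent vertices and preserve hue and color, where the dappled triangular grid $\mathbf{T}$ has vertex set $\mathbb{Z}^2$, with $(i_1,j_1),(i_2,j_2)$ adjacent iff $(i_2-i_1,j_2-j_1)\in\{\pm(1,0),\pm(0,1),\pm(1,1)\}$, hue $(i+j)\bmod 3$ and color $(i\bmod 2,j\bmod 2)$. $\varphi$ is viable on connected hued $K$ if $K^\varphi$ has a homomorphism to $\mathbf{T}$. For a closed walk $Z$, a one-step retraction deletes $u_{i+1},u_{i+2}$ from a cyclically consecutive triple $u_iu_{i+1}u_{i+2}$ with $u_i=u_{i+2}$ (length-two closed walks retract to empty); $Z$ is null-homotopic if repeated one-step retractions reduce it to the empty walk. A viable coloring $\varphi$ is null-homotopic on a closed walk (here the cycle $C$) if the closed walks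 $f(C)$, for homomorphisms $f$ from $C^\varphi$ to $\mathbf{T}$, are null-homotopic. *)

From HB Require Import structures.
From mathcomp Require Import all_boot all_order all_algebra perm.
Set Implicit Arguments. Unset Strict Implicit. Unset Printing Implicit Defensive.
Import GRing.Theory Num.Theory.

(* Plane graphs as combinatorial maps (rotation systems).              *)
(* Darts D, vertices V, [tail x] = vertex at which dart x starts,       *)
(* [e] = edge involution (reverse dart), [n] = rotation of darts around *)
(* a vertex.  Faces are the orbits of [face x := n (e x)].             *)
(* Genus 0 (planarity) is expressed by Euler's formula V - E + F = 2   *)
(* (with E = #|D|/2), for a connected map.                             *)
Section Maps.
Variables (V D : finType) (tail : D -> V) (e n : {perm D}).

Definition face (x : D) : D := n (e x).

Definition adjH (u v : V) : bool :=
  [exists x : D, (tail x == u) && (tail (e x) == v)].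

Definition simple_map : Prop :=
  [/\ forall x, e (e x) = x,
      forall x, tail (e x) != tail x
    & forall x y, tail x = tail y -> tail (e x) = tail (e y) -> x = y].

Definition vertex_rotation : Prop :=
  (forall x y, fconnect n x y = (tail x == tail y)) /\
  (forall v : V, exists x : D, tail x = v).

Definition two_connected : Prop :=
  (3 <= #|V|)%N /\
  forall w u v : V, u != w -> v != w ->
    connect [rel a b | adjH a b && (a != w) && (b != w)] u v.

(* Euler's formula: 2 (#V + #F) = #D + 4, i.e. V - E + F = 2 *)
Definition euler_planar : Prop :=
  (2 * (#|V| + #|[pred x : D | froot face x == x]|) = #|D| + 4)%N.

Definition near_quadrangulation (o : D) : Prop :=
  [/\ simple_map, vertex_rotation, two_connected, euler_planar
    & forall x : D, ~~ fconnect face o x -> order face x = 4%N].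

Definition outer_boundary (o : D) : seq V := [seq tail x | x <- orbit face o].

(* inner faces are represented by their canonical dart (froot) *)
Definition inner_face_rep (o : D) (x : D) : bool :=
  (froot face x == x) && ~~ fconnect face o x.

Definition GV (o : D) : finType := (V + {x : D | inner_face_rep o x})%type.

Definition on_face (F : D) (u : V) : bool :=
  [exists y : D, fconnect face F y && (tail y == u)].

Definition adjG (o : D) (a b : GV o) : bool :=
  match a, b with
  | inl u, inl v => adjH u v
  | inl u, inr F => on_face (val F) u
  | inr F, inl u => on_face (val F) u
  | inr _, inr _ => false
  end.

(* hues of the patch extension: the bipartition class h of H gives hues
   0/1, the new face vertices get hue 2 *)
Definition hueG (o : D) (h : V -> bool) (a : GV o) : nat :=
  match a with inl v => nat_of_bool (h v) | inr _ => 2%N end.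

End Maps.

(* proper 4-colorings, colors in Z_2^2 = bool * bool *)
Definition four_coloring (T : finType) (adj : rel T) (c : T -> bool * bool) : Prop :=
  forall a b, adj a b -> c a != c b.

Definition adjT (p q : int * int) : bool :=
  ((q.1 - p.1)%R, (q.2 - p.2)%R) \in
    ([:: (1, 0); (-1, 0); (0, 1); (0, -1); (1, 1); (-1, -1)]%R : seq (int * int)).

Definition hueT (p : int * int) : nat := `|((p.1 + p.2)%R %% 3)%Z|%N.

Definition colT (p : int * int) : bool * bool := (odd `|p.1|%N, odd `|p.2|%N).

(* g : V -> Z^2 restricted to the vertices of the cycle s is a homomorphism
   of the hued, colored cycle s^phi to T *)
Definition cycle_hom (V : eqType) (s : seq V) (hue : V -> nat)
  (col : V -> bool * bool) (g : V -> int * int) : bool :=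
  cycle (fun u v => adjT (g u) (g v)) s &&
  all (fun v => (hueT (g v) == hue v) && (colT (g v) == col v)) s.

Definition viable_on_cycle (V : eqType) (s : seq V) (hue : V -> nat)
  (col : V -> bool * bool) : Prop :=
  exists g, cycle_hom s hue col g.

Definition retract_step (s t : seq (int * int)) : Prop :=
  (size s = 2%N /\ t = [::]) \/
  exists i u v r, rot i s = u :: v :: u :: r /\ t = u :: r.

Inductive null_homotopic : seq (int * int) -> Prop :=
| nh_nil : null_homotopic [::]
| nh_step s t : retract_step s t -> null_homotopic t -> null_homotopic s.

Definition null_homotopic_on_cycle (V : eqType) (s : seq V) (hue : V -> nat)
  (col : V -> bool * bool) : Prop :=
  forall g, cycle_hom s hue col g -> null_homotopic (map g s).

From Pilot Require Import Defs.
From mathcomp Require Import all_boot all_order all_algebra perm zify ring.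
Import GRing.Theory.
Set Implicit Arguments. Unset Strict Implicit. Unset Printing Implicit Defensive.

(* Call two consecutive edges [x], [face x] of an inner face linked when
   their outer ends have the same colour, and call the classes of edges under
   linking walls.  The face vertex of an inner face takes a colour missing
   from its four corners, so two opposite corners agree and the four edges of
   the face pair up into links: every wall meets every inner face evenly.  By
   Euler's formula the cut space of [H] consists of all such edge sets, so
   each wall [W] is a cut: some 2-colouring of the vertices flips exactly
   across [W].  Hence along the outer cycle, between two crossings of a wall,
   every other wall is crossed an even number of times, and some wall is
   crossed twice in a row.  In [T] both crossings add the colour label of
   that wall and both ends carry the same hue (boundary hues are 0 and 1), so
   they are the same neighbour of the middle point: the walk backtracks.
   Retracting this spike and iterating contracts the whole walk. *)

Lemma adjTE (p q : int * int) : adjT p q =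
  [|| (q.1 - p.1 == 1) && (q.2 - p.2 == 0), (q.1 - p.1 == -1) && (q.2 - p.2 == 0),
      (q.1 - p.1 == 0) && (q.2 - p.2 == 1), (q.1 - p.1 == 0) && (q.2 - p.2 == -1),
      (q.1 - p.1 == 1) && (q.2 - p.2 == 1) | (q.1 - p.1 == -1) && (q.2 - p.2 == -1)]%R.
Proof. by rewrite /adjT !inE !xpair_eqE. Qed.

Lemma adjT_irrefl p : ~~ adjT p p.
Proof. by rewrite adjTE; case: p => a b /=; apply/negP; lia. Qed.

Lemma adjT_sym p q : adjT p q = adjT q p.
Proof. by rewrite !adjTE; case: p q => a b [c d] /=; apply/idP/idP; lia. Qed.

Lemma hueT_lt3 p : (hueT p < 3)%N.
Proof. by rewrite /hueT; case: p => a b /=; lia. Qed.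

Lemma adjT_hue p q : adjT p q -> hueT p != hueT q.
Proof. by rewrite adjTE /hueT; case: p q => a b [c d] /=; lia. Qed.

Lemma colT_eq_mod2 p q : colT p = colT q ->
  ((p.1 - q.1) %% 2 = 0)%Z /\ ((p.2 - q.2) %% 2 = 0)%Z.
Proof.
case: p q => a b [c d] [].
by do 2![case: (odd _) / idP; case: (odd _) / idP => //=]; lia.
Qed.

Lemma adjT_neighbor_uniq p q r :
  adjT p q -> adjT p r -> hueT q = hueT r -> colT q = colT r -> q = r.
Proof.
case: p q r => a b [c d] [f g] + + + /colT_eq_mod2 /= [even1 even2].
by rewrite !adjTE /hueT /= => adj_q adj_r hue_qr; congr pair; lia.
Qed.

Lemma nth_rot (T : Type) (x0 : T) (s : seq T) k m :
  (k <= size s)%N -> (m < size s)%N -> nth x0 (rot k s) m = nth x0 s ((k + m) %% size s).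
Proof.
move=> le_k_s lt_m_s; rewrite nth_cat size_drop.
case: ltnP => [lt_m | le_m]; first by rewrite nth_drop modn_small //; lia.
rewrite nth_take; last by lia.
have -> : (k + m = (m - (size s - k)) + size s)%N by lia.
by rewrite modnDr modn_small //; lia.
Qed.

Lemma cycle_nth_mod (T : Type) (x0 : T) (R : rel T) (s : seq T) j :
  (0 < size s)%N -> cycle R s -> R (nth x0 s (j %% size s)) (nth x0 s (j.+1 %% size s)).
Proof.
case: s => [|x p] // _ /(pathP x0) Rs /=; set L := (size p).+1.
have lt_j : (j %% L < L)%N by rewrite ltn_mod.
have := Rs (j %% L); rewrite size_rcons => /(_ lt_j).
have -> : nth x0 (x :: rcons p x) (j %% L) = nth x0 (x :: p) (j %% L).
  by case: (j %% L) lt_j => [|i] //= lt_i; rewrite nth_rcons; case: ltnP => //; lia.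
rewrite nth_rcons; case: ltnP => [lt_p | le_p].
  suff -> : (j.+1 %% L = (j %% L).+1)%N by [].
  by rewrite -addn1 -modnDml (@modn_small (j %% L + 1)) ?addn1 // /L; lia.
have jL : (j %% L = size p)%N by rewrite /L in lt_j le_p *; lia.
suff -> : (j.+1 %% L = 0)%N by rewrite jL eqxx.
by rewrite -addn1 -modnDml jL addn1 modnn.
Qed.

Lemma rot_mod_cons3 (T : Type) (x0 : T) (s : seq T) j : (2 < size s)%N ->
  exists r, rot (j %% size s) s =
    [:: nth x0 s (j %% size s), nth x0 s (j.+1 %% size s), nth x0 s (j.+2 %% size s) & r].
Proof.
move=> s_gt2; have le_k : (j %% size s <= size s)%N by rewrite ltnW // ltn_mod; lia.
have nth_k m : (m < 3)%N -> nth x0 (rot (j %% size s) s) m = nth x0 s ((j + m) %% size s).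
  by move=> lt_m3; rewrite nth_rot ?modnDml //; lia.
case: (rot _ s) (size_rot (j %% size s) s) nth_k => [|a [|b [|c r]]] /=; try lia.
move=> _ nth_k; exists r; congr [:: _, _, _ & _].
- by rewrite -[j]addn0 -nth_k.
- by rewrite -addn1 -nth_k.
- by rewrite -addn2 -nth_k.
Qed.

Lemma exists_step_change (f : nat -> bool) m d :
  f m != f d -> (m <= d)%N -> exists2 k, (m <= k < d)%N & f k != f k.+1.
Proof.
elim: d => [|d IH] fmd le_md.
  by move: fmd; rewrite (_ : m = 0%N) ?eqxx //; lia.
have [lt_dm | le_md'] := ltnP d m.
  by move: fmd; rewrite (_ : m = d.+1) ?eqxx //; lia.
have [fd | fd] := eqVneq (f d) (f d.+1); last by exists d => //; lia.
by have [|k /andP[le_mk lt_kd] fk] := IH _ le_md'; [rewrite fd | exists k => //; lia].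
Qed.

Definition addc (p q : bool * bool) : bool * bool := (p.1 (+) q.1, p.2 (+) q.2).

Lemma addcC p q : addc p q = addc q p.
Proof. by rewrite /addc addbC [q.2 (+) _]addbC. Qed.

Lemma addcI p : injective (addc p).
Proof. by case: p => a b [c d] [c1 d1]; rewrite /addc /= => -[/addbI -> /addbI ->]. Qed.

Section WallWalk.
Variables (A : eqType) (W : finType) (pt : A -> int * int) (wall : A -> W)
  (side : A -> W -> bool) (label : W -> bool * bool).

(* [wall a] is the wall crossed by the step leaving [a], [side a w] tells on
   which side of the wall [w] the point [a] lies, and [label w] is the sum of
   the colours at the two ends of any edge of [w]. *)
Definition crossing : rel A := fun a b =>
  [&& adjT (pt a) (pt b), addc (colT (pt a)) (colT (pt b)) == label (wall a)
    & [forall w, (side a w != side b w) == (wall a == w)]].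

Definition wall_walk (z : seq A) : Prop :=
  [/\ cycle crossing z, all (fun a => hueT (pt a) != 2) z
    & {in z &, forall a b, wall a = wall b -> forall w, w != wall a -> side a w = side b w}].

Lemma crossing_side a b w : crossing a b -> (side a w != side b w) = (wall a == w).
Proof. by case/and3P=> _ _ /forallP /(_ w) /eqP. Qed.

Lemma crossing_congr_r x a c :
  pt c = pt a -> side c =1 side a -> crossing x c = crossing x a.
Proof.
move=> pca sca; rewrite /crossing pca; congr [&& _, _ & _].
by apply: eq_forallb => w; rewrite sca.
Qed.

Lemma crossing_backtrack a b c :
  crossing a b -> crossing b c -> wall a = wall b ->
  all (fun x => hueT (pt x) != 2) [:: a; b; c] -> pt c = pt a /\ side c =1 side a.
Proof.
move=> ab bc ab_wall /and4P[ha hb hc _]; split.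
  move: (ab) (bc) => /and3P[Tab /eqP Cab _] /and3P[Tbc /eqP Cbc _].
  apply: (@adjT_neighbor_uniq (pt b)) => //; first by rewrite adjT_sym.
    move: (adjT_hue Tab) (adjT_hue Tbc) (hueT_lt3 (pt a)) (hueT_lt3 (pt b)).
    by move: (hueT_lt3 (pt c)) ha hb hc; lia.
  by apply: (@addcI (colT (pt b))); rewrite Cbc -ab_wall -Cab addcC.
move=> w; move: (crossing_side w ab) (crossing_side w bc); rewrite -ab_wall.
by case: (wall a == w); case: (side a w); case: (side b w); case: (side c w).
Qed.

Lemma wall_walk_rot k z : wall_walk z -> wall_walk (rot k z).
Proof.
case=> zc zh zs; split; rewrite ?rot_cycle ?(eq_all_r (mem_rot k z)) // => a b.
by rewrite !mem_rot; apply: zs.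
Qed.

Lemma wall_walk_backtrack a b c r :
  wall_walk [:: a, b, c & r] -> wall a = wall b -> pt c = pt a /\ wall_walk (c :: r).
Proof.
case=> /= /and3P[ab bc cr] /and4P[ha hb hc hr] zs ab_wall.
have [pca sca] := crossing_backtrack ab bc ab_wall (introT and4P (And4 ha hb hc isT)).
split=> //; split=> [||x y xr yr].
- by move: cr; rewrite /= !rcons_path (crossing_congr_r _ pca sca).
- by rewrite /= hc hr.
- by apply: zs; do 2!apply: mem_behead.
Qed.

Section RepeatedWall.
Variable node : nat -> A.
Hypothesis node_side : forall j w,
  (side (node j) w != side (node j.+1) w) = (wall (node j) == w).
Hypothesis node_wall_side : forall i j w,
  wall (node i) = wall (node j) -> w != wall (node i) -> side (node i) w = side (node j) w.

(* Between two crossings of the same wall, any other wall crossed is crossed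
   again; iterating on the nearer pair ends with two consecutive crossings. *)
Lemma exists_repeated_wall d i : (0 < d)%N -> wall (node i) = wall (node (i + d)) ->
  exists j, wall (node j) = wall (node j.+1).
Proof.
elim/ltn_ind: d i => d IH i d_gt0 eq_wall.
have [lt_d2 | le2d] := ltnP d 2.
  by exists i; move: eq_wall; rewrite (_ : d = 1%N) ?addn1 //; lia.
have [|ne_wall] := eqVneq (wall (node i)) (wall (node i.+1)); first by exists i.
set w1 := wall (node i.+1); pose f k := side (node (i + k)) w1.
have f0d : f 0%N = f d by rewrite /f addn0; apply: node_wall_side; rewrite // eq_sym.
have f01 : f 0%N = f 1%N.
  by apply/eqP/negPn; rewrite /f addn0 addn1 node_side (negbTE ne_wall).
have f12 : f 1%N != f 2%N by rewrite /f addn1 addn2 node_side eqxx.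
have [|k /andP[le2k lt_kd] fk] := @exists_step_change f 2 d _ le2d.
  by rewrite -f0d f01 eq_sym.
apply: (IH k.-1 _ i.+1); [lia | lia |].
by move: fk; rewrite /f addnS node_side /w1 => /eqP <-; congr (wall (node _)); lia.
Qed.

End RepeatedWall.

Lemma wall_walk_backtrack_rot z : wall_walk z -> (2 < size z)%N ->
  exists k a b c r, rot k z = [:: a, b, c & r] /\ wall a = wall b.
Proof.
case: z => [//|a0 z0]; set z := a0 :: z0 => -[zc _ zs] z_gt2.
pose node j := nth a0 z (j %% size z).
have node_cross j : crossing (node j) (node j.+1) by apply: cycle_nth_mod.
have [j eq_wall] : exists j, wall (node j) = wall (node j.+1).
  apply: (@exists_repeated_wall node _ _ (size z) 0) => //.
  - by move=> j w; apply: crossing_side.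
  - by move=> i j w eq_ij; apply: (zs _ _ _ _ eq_ij); apply: mem_nth; rewrite ltn_mod.
  - by rewrite /node add0n modnn mod0n.
have [r rot_z] := rot_mod_cons3 a0 j z_gt2.
by exists (j %% size z), (node j), (node j.+1), (node j.+2), r.
Qed.

Theorem wall_walk_null_homotopic z : wall_walk z -> null_homotopic (map pt z).
Proof.
have [m] := ubnP (size z); elim: m z => // m IH z lt_z_m zw.
case: z lt_z_m zw => [|a [|b [|c r]]] lt_z_m zw.
- exact: nh_nil.
- by case: zw; rewrite /= /crossing (negbTE (adjT_irrefl _)).
- by apply: nh_step nh_nil; left.
have [k [a' [b' [c' [r' [rot_z ab_wall]]]]]] := wall_walk_backtrack_rot zw isT.
have [pca zw'] : pt c' = pt a' /\ wall_walk (c' :: r').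
  by apply: wall_walk_backtrack ab_wall; rewrite -rot_z; apply: wall_walk_rot.
apply: (nh_step _ (IH (c' :: r') _ zw')).
  by right; exists k, (pt a'), (pt b'), (map pt r'); rewrite -map_rot rot_z /= pca.
by move: lt_z_m (size_rot k [:: a, b, c & r]); rewrite rot_z /=; lia.
Qed.

End WallWalk.

Lemma connect_forward (T : finType) (R : rel T) (S : pred T) :
  (forall x y, R x y -> S x -> S y) -> forall x y, connect R x y -> S x -> S y.
Proof.
move=> RS x y /connectP [p Rp ->] {y}.
by elim: p x Rp => [|z p IH] x //= /andP[Rxz Rp] Sx; apply: IH Rp (RS _ _ Rxz Sx).
Qed.

Lemma two_connected_connect (V D : finType) (tail : D -> V) (e : {perm D}) :
  two_connected tail e -> forall u v, connect (adjH tail e) u v.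
Proof.
case=> V_ge3 conn_del u v.
have [w]: exists w, w \notin pred2 u v.
  apply/existsP; rewrite -negb_forall; apply/negP => /forallP all_uv.
  suff : (#|V| <= #|pred2 u v|)%N by rewrite card2; case: (u != v); lia.
  by apply: subset_leq_card; apply/subsetP => x _; apply: all_uv.
rewrite !inE negb_or => /andP[wu wv].
apply: connect_sub (conn_del w u v _ _); rewrite 1?eq_sym //.
by move=> a b /andP[/andP[ab _] _]; apply: connect1.
Qed.

Section Map.
Variables (V D : finType) (tail : D -> V) (e n : {perm D}).
Hypothesis map_simple : simple_map tail e.
Hypothesis map_rot : vertex_rotation tail n.

Local Notation face := (face e n).

Lemma eK : involutive e.
Proof. by case: map_simple. Qed.

Lemma e_neq x : e x != x.
Proof. by case: map_simple => _ tail_e _; apply: contra (tail_e x) => /eqP ->. Qed.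

Lemma tail_n x : tail (n x) = tail x.
Proof. by case: map_rot => rotE _; apply/esym/eqP; rewrite -rotE fconnect1. Qed.

Lemma tail_face x : tail (face x) = tail (e x).
Proof. exact: tail_n. Qed.

Lemma face_inj : injective face.
Proof. by move=> x y /perm_inj /perm_inj. Qed.

Lemma n_face x : n x = face (e x).
Proof. by rewrite /Defs.face eK. Qed.

Lemma fconnect_face_sym : connect_sym (frel face).
Proof. exact: fconnect_sym face_inj. Qed.

Lemma froot_face x : froot face (face x) = froot face x.
Proof. by apply/esym/(fingraph.rootP fconnect_face_sym); apply: fconnect1. Qed.

Hypothesis map_connected : forall u v, connect (adjH tail e) u v.

Lemma dart_closure (S : pred D) x0 :
  (forall x, S x -> S (e x)) -> (forall x, S x -> S (n x)) -> S x0 -> forall x, S x.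
Proof.
move=> Se Sn Sx0.
have S_tail y y' : S y -> tail y = tail y' -> S y'.
  move=> Sy tail_yy'; case: map_rot => rotE _.
  apply: (connect_forward (R := frel n)) Sy; last by rewrite rotE tail_yy'.
  by move=> a _ /eqP <-; apply: Sn.
pose P v := [exists y, S y && (tail y == v)].
have P_all v : P v.
  apply: (@connect_forward _ _ P _ (tail x0)); last 2 first.
  - exact: map_connected.
  - by apply/existsP; exists x0; rewrite Sx0 eqxx.
  move=> a b /existsP[d /andP[/eqP da /eqP db]] /existsP[y /andP[Sy /eqP ya]].
  apply/existsP; exists (e d); rewrite db eqxx andbT; apply: Se.
  by apply: S_tail Sy _; rewrite ya da.
by move=> x; case/existsP: (P_all (tail x)) => y /andP[Sy /eqP]; apply: S_tail.
Qed.

End Map.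

Section F2.
Local Open Scope ring_scope.

Lemma F2_cases (a : 'F_2) : a = 0 \/ a = 1.
Proof. by case: a => [[|[|]]] // ?; [left | right]; apply: val_inj. Qed.

Lemma F2_addrr (a : 'F_2) : a + a = 0.
Proof. by case: (F2_cases a) => ->; apply/eqP. Qed.

Lemma F2_addr_eq0 (a b : 'F_2) : (a + b == 0) = (a == b).
Proof. by case: (F2_cases a) => ->; case: (F2_cases b) => ->. Qed.

Lemma F2_addr_neq0 (a b : 'F_2) : (a + b != 0) = ((a != 0) != (b != 0)).
Proof. by case: (F2_cases a) => ->; case: (F2_cases b) => ->. Qed.

Lemma F2_natr m : (m%:R : 'F_2) = (odd m)%:R.
Proof. by rewrite -(@Fp_nat_mod 2) // modn2. Qed.

Lemma F2_bool_neq0 (b : bool) : ((b%:R : 'F_2) != 0) = b.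
Proof. by case: b. Qed.

Lemma F2_sum_bool (T : finType) (P : pred T) : \sum_(x : T) ((P x)%:R : 'F_2) = #|P|%:R.
Proof.
rewrite -natr_sum -sum1_card; congr _%:R.
by rewrite [RHS]big_mkcond; apply: eq_bigr => x _; rewrite unfold_in; case: (P x).
Qed.

End F2.

Section CutSpace.
Variables (V D : finType) (tail : D -> V) (e n : {perm D}) (o : D).
Hypothesis map_simple : simple_map tail e.
Hypothesis map_rot : vertex_rotation tail n.
Hypothesis map_connected : forall u v, connect (adjH tail e) u v.
Hypothesis map_euler : euler_planar V e n.

Local Notation face := (face e n).
Local Notation inner_face := (inner_face_rep e n o).
Local Notation eK := (eK map_simple).
Local Notation face_sym := (@fconnect_face_sym _ e n).

Definition edge_rep : pred D := fun x => (enum_rank x < enum_rank (e x))%N.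

Lemma edge_rep_e x : edge_rep (e x) = ~~ edge_rep x.
Proof.
rewrite /edge_rep eK -leqNgt ltn_neqAle andb_idl //.
by move=> _; apply/negP => /eqP/val_inj/enum_rank_inj ex; case/eqP: (e_neq map_simple x).
Qed.

Lemma forall_edge_rep (P : D -> Prop) :
  (forall x, P x -> P (e x)) -> (forall j : 'I_#|edge_rep|, P (enum_val j)) -> forall x, P x.
Proof.
move=> Pe Pj x; have [rx | rex] := boolP (edge_rep x).
  by have := Pj (enum_rank_in rx x); rewrite enum_rankK_in.
have rex' : e x \in edge_rep by rewrite -[_ \in _]/(edge_rep (e x)) edge_rep_e.
by have := Pe _ (Pj (enum_rank_in rex' (e x))); rewrite enum_rankK_in // eK.
Qed.

Lemma big_edge_rep (R : Type) (idx : R) (op : Monoid.com_law idx) (G : D -> R) :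
  \big[op/idx]_(x | edge_rep x) op (G x) (G (e x)) = \big[op/idx]_x G x.
Proof.
rewrite big_split /= [RHS](bigID edge_rep) /=; congr (op _ _).
rewrite (reindex_inj (@perm_inj _ e)) /=.
by apply: eq_big => x; rewrite ?edge_rep_e ?eK.
Qed.

Lemma card_darts : #|D| = (2 * #|edge_rep|)%N.
Proof.
have := big_edge_rep addn (fun _ => 1%N).
by rewrite (eq_bigr (fun _ => 2%N)) // sum_nat_const sum1_card mulnC => <-.
Qed.

Lemma card_froots : #|[pred x | froot face x == x]| = (#|inner_face| + 1)%N.
Proof.
rewrite -[LHS](cardID (fconnect face o)) addnC; congr (_ + _)%N.
  by apply: eq_card => x; rewrite !inE /inner_face_rep andbC.
apply: (@eq_card1 _ (froot face o)) => x; rewrite !inE.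
apply/andP/eqP => [[/eqP rx o_x] | ->]; last first.
  by rewrite (root_root face_sym) connect_root.
by rewrite -rx; apply/esym/(fingraph.rootP face_sym).
Qed.

Lemma card_edge_rep : (#|edge_rep| + 1 = #|V| + #|inner_face|)%N.
Proof. by move: map_euler; rewrite /euler_planar card_darts card_froots; lia. Qed.

Local Open Scope ring_scope.

Definition vincid (v : V) (x : D) : 'F_2 := (tail x == v)%:R + (tail (e x) == v)%:R.
Definition fincid (x r : D) : 'F_2 := (froot face x == r)%:R + (froot face (e x) == r)%:R.

Definition vertex_edge_mx : 'M['F_2]_(#|V|, #|edge_rep|) :=
  \matrix_(i, j) vincid (enum_val i) (enum_val j).
Definition edge_face_mx : 'M['F_2]_(#|edge_rep|, #|inner_face|) :=
  \matrix_(j, f) fincid (enum_val j) (enum_val f).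

Lemma sum_edge_rep_pair (M : nmodType) (G : D -> M) :
  \sum_(j < #|edge_rep|) (G (enum_val j) + G (e (enum_val j))) = \sum_x G x.
Proof. by rewrite -(big_enum_val (A := edge_rep) (fun x => G x + G (e x))) big_edge_rep. Qed.

Lemma vertex_edge_face_mx0 : vertex_edge_mx *m edge_face_mx = 0.
Proof.
apply/matrixP => i f; rewrite !mxE; set v := enum_val i; set r := enum_val f.
pose K x : 'F_2 := (froot face x == r)%:R * (tail x == v)%:R.
pose H x := K x + K (face x).
rewrite (eq_bigr (fun j => H (enum_val j) + H (e (enum_val j)))); last first.
  move=> j _; rewrite !mxE /H /K /vincid /fincid !froot_face.
  by rewrite !(tail_face _ map_rot) eK; ring.
rewrite sum_edge_rep_pair big_split /=.
by rewrite [X in X + _](reindex_inj (@face_inj _ e n)) F2_addrr.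
Qed.

Lemma vertex_edge_mx_entry (u : 'rV['F_2]_#|V|) j :
  (u *m vertex_edge_mx) 0 j =
  u 0 (enum_rank (tail (enum_val j))) + u 0 (enum_rank (tail (e (enum_val j)))).
Proof.
have pick w : \sum_(i < #|V|) u 0 i * (w == enum_val i)%:R = u 0 (enum_rank w).
  rewrite (bigD1 (enum_rank w)) //= enum_rankK eqxx mulr1 big1 ?addr0 // => i ne_i.
  by case: eqP => [wi|_]; [rewrite wi enum_valK eqxx in ne_i | rewrite mulr0].
rewrite mxE -pick -pick -big_split /=; apply: eq_bigr => i _.
by rewrite !mxE mulrDr.
Qed.

Lemma ker_vertex_edge_mx (u : 'rV['F_2]_#|V|) :
  u *m vertex_edge_mx = 0 -> (u <= (const_mx 1 : 'rV['F_2]_#|V|))%MS.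
Proof.
move=> u0; pose U v := u 0 (enum_rank v).
have U_edge : forall x, U (tail x) = U (tail (e x)).
  apply: forall_edge_rep => [x ux|j]; first by rewrite eK ux.
  by apply/eqP; rewrite -F2_addr_eq0 -vertex_edge_mx_entry u0 mxE.
have U_const v : U v = U (tail o).
  apply/eqP/(@connect_forward _ _ [pred w | U w == U (tail o)] _ _ _ (map_connected (tail o) v)).
    by move=> a b /existsP[d /andP[/eqP <- /eqP <-]] /=; rewrite U_edge.
  by rewrite /= eqxx.
suff -> : u = U (tail o) *: const_mx 1 by apply: scalemx_sub.
by apply/rowP => i; rewrite !mxE mulr1 -(U_const (enum_val i)) /U enum_valK.
Qed.

Lemma rank_vertex_edge_mx : (#|V| - \rank vertex_edge_mx <= 1)%N.
Proof.
rewrite -mxrank_ker; apply: leq_trans (rank_leq_row (const_mx 1 : 'rV['F_2]_#|V|)).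
apply/mxrankS/row_subP => i; apply: ker_vertex_edge_mx.
by rewrite -row_mul mulmx_ker row0.
Qed.

(* A set of inner faces with empty boundary would be closed under [e] and [n],
   hence contain every dart, including those of the outer face. *)
Lemma ker_edge_face_tr_mx (u : 'rV['F_2]_#|inner_face|) :
  u *m edge_face_mx^T = 0 -> u = 0.
Proof.
move=> u0; pose U x := \sum_(f < #|inner_face|) u 0 f * (froot face x == enum_val f)%:R.
have U_e : forall x, U x = U (e x).
  apply: forall_edge_rep => [x ux|j]; first by rewrite eK ux.
  apply/eqP; rewrite -F2_addr_eq0; move/matrixP: u0 => /(_ 0 j); rewrite !mxE => <-.
  by rewrite -big_split /=; apply/eqP/eq_bigr => f _; rewrite !mxE /fincid mulrDr.
have U_o : U o = 0.
  rewrite /U big1 // => f _; have /andP[_ o_f] : inner_face (enum_val f) := enum_valP f.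
  case: eqP => [of_|_]; last by rewrite mulr0.
  by rewrite -of_ connect_root in o_f.
apply/rowP => f; rewrite mxE; have [//|uf1] := F2_cases (u 0 f).
have Uf : U (enum_val f) != 0.
  have /andP[/eqP rootf _] := enum_valP f; rewrite /U rootf (bigD1 f) //= eqxx mulr1 uf1.
  rewrite big1 ?addr0 ?oner_neq0 // => g gf.
  by case: eqP => [/enum_val_inj fg|_]; [rewrite fg eqxx in gf | rewrite mulr0].
have U_n x : U (n x) = U x by rewrite (n_face n map_simple) /U froot_face -/(U _) -U_e.
suff : U o != 0 by rewrite U_o eqxx.
apply: (dart_closure map_rot map_connected (S := [pred x | U x != 0]) _ _ Uf) => x /=.
  by rewrite -U_e.
by rewrite U_n.
Qed.

Lemma rank_edge_face_mx : \rank edge_face_mx = #|inner_face|.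
Proof.
have ker0 : kermx edge_face_mx^T = 0.
  apply/row_matrixP => i; rewrite row0; apply: ker_edge_face_tr_mx.
  by rewrite -row_mul mulmx_ker row0.
have := mxrank_ker edge_face_mx^T; rewrite ker0 mxrank0 mxrank_tr => /esym/eqP.
by rewrite subn_eq0 => le_rank; apply/eqP; rewrite eqn_leq rank_leq_col.
Qed.

(* Euler's formula makes the cut space (the row space of [vertex_edge_mx]) as
   large as the space of edge sets meeting every inner face evenly. *)
Lemma kermx_edge_face_mx_sub : (kermx edge_face_mx <= vertex_edge_mx)%MS.
Proof.
have im_sub : (vertex_edge_mx <= kermx edge_face_mx)%MS.
  by apply/sub_kermxP; apply: vertex_edge_face_mx0.
case: (mxrank_leqif_sup im_sub) => _ <-.
move: (mxrankS im_sub) rank_vertex_edge_mx card_edge_rep.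
by rewrite mxrank_ker rank_edge_face_mx => *; apply/eqP; lia.
Qed.

Lemma even_faces_cut (X : pred D) :
  (forall x, X (e x) = X x) ->
  (forall r, inner_face r -> ~~ odd #|[pred y | fconnect face r y && X y]|) ->
  exists sigma : V -> bool, forall x, (sigma (tail x) != sigma (tail (e x))) = X x.
Proof.
move=> X_e X_even; pose uX : 'rV['F_2]_#|edge_rep| := \row_j (X (enum_val j))%:R.
have uX_ker : uX *m edge_face_mx = 0.
  apply/rowP => f; rewrite !mxE; set r := enum_val f.
  have inner_r : inner_face r := enum_valP f; have /andP[/eqP rootr _] := inner_r.
  pose G x : 'F_2 := (X x)%:R * (froot face x == r)%:R.
  rewrite (eq_bigr (fun j => G (enum_val j) + G (e (enum_val j)))); last first.
    by move=> j _; rewrite !mxE /G /fincid X_e mulrDr.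
  rewrite sum_edge_rep_pair (eq_bigr (fun x => (fconnect face r x && X x)%:R)); last first.
    move=> x _; rewrite /G -{1}rootr (root_connect face_sym) (face_sym x).
    by case: (X x); case: (fconnect face r x); rewrite ?mulr1 ?mulr0.
  by rewrite (F2_sum_bool [pred x | fconnect face r x && X x]) F2_natr (negbTE (X_even r inner_r)).
have /submxP[w uXw] : (uX <= vertex_edge_mx)%MS.
  by apply: submx_trans kermx_edge_face_mx_sub; apply/sub_kermxP.
exists (fun v => w 0 (enum_rank v) != 0).
apply: forall_edge_rep => [x px|j]; first by rewrite eK X_e -px eq_sym.
by rewrite -F2_addr_neq0 -vertex_edge_mx_entry -uXw mxE F2_bool_neq0.
Qed.

End CutSpace.

Lemma card_fconnect_count (T : finType) (f : T -> T) (r : T) (P : pred T) :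
  #|[pred y | fconnect f r y && P y]| = count P (orbit f r).
Proof.
rewrite -size_filter -(card_uniqP (filter_uniq _ (orbit_uniq f r))).
by apply: eq_card => y; rewrite !inE mem_filter fconnect_orbit andbC.
Qed.

(* The four corners of an inner face avoid the colour of the face vertex, so
   they use at most three colours and two opposite corners agree. *)
Lemma quad_opposite_colors (c0 c1 c2 c3 cF : bool * bool) :
  c0 != c1 -> c1 != c2 -> c2 != c3 -> c3 != c0 ->
  c0 != cF -> c1 != cF -> c2 != cF -> c3 != cF -> (c0 == c2) || (c1 == c3).
Proof.
by case: c0 => [[] []]; case: c1 => [[] []]; case: c2 => [[] []]; case: c3 => [[] []];
  case: cF => [[] []].
Qed.

Section PatchColoring.
Variables (V D : finType) (tail : D -> V) (e n : {perm D}) (o : D).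
Variable c : GV V e n o -> bool * bool.
Hypothesis map_simple : simple_map tail e.
Hypothesis map_rot : vertex_rotation tail n.
Hypothesis map_connected : forall u v, connect (adjH tail e) u v.
Hypothesis map_euler : euler_planar V e n.
Hypothesis inner_quad : forall x, ~~ fconnect (face e n) o x -> order (face e n) x = 4%N.
Hypothesis c_proper : four_coloring (@adjG V D tail e n o) c.

Local Notation face := (face e n).
Local Notation eK := (eK map_simple).
Local Notation tail_face := (tail_face e map_rot).

Definition vcol (v : V) := c (inl v).
Definition edge_label (x : D) := addc (vcol (tail x)) (vcol (tail (e x))).
Definition inner (x : D) := ~~ fconnect face o x.

Definition face_link (x y : D) :=
  [&& inner x, y == face x & vcol (tail x) == vcol (tail (face (face x)))].

Definition wall_rel : rel D := fun x y =>
  [|| y == e x, x == e y, face_link x y | face_link y x].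

Lemma wall_rel_sym : symmetric wall_rel.
Proof. by move=> x y; rewrite /wall_rel orbA orbC -!orbA orbA orbC -!orbA; do !bool_congr. Qed.

Local Notation wall_sym := (sym_connect_sym wall_rel_sym).

Definition wall (x : D) : D := fingraph.root wall_rel x.

Lemma wall_eq x y : wall_rel x y -> wall y = wall x.
Proof. by move=> xy; apply/esym/(fingraph.rootP wall_sym)/connect1. Qed.

Lemma wall_e x : wall (e x) = wall x.
Proof. by apply: wall_eq; rewrite /wall_rel eqxx. Qed.

Lemma edge_label_e x : edge_label (e x) = edge_label x.
Proof. by rewrite /edge_label eK addcC. Qed.

Lemma edge_label_link x y : face_link x y -> edge_label y = edge_label x.
Proof.
case/and3P=> _ /eqP -> /eqP col_x.
by rewrite /edge_label -(tail_face (face x)) -col_x tail_face addcC.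
Qed.

Lemma edge_label_wall x : edge_label (wall x) = edge_label x.
Proof.
apply/eqP; apply: (@connect_forward _ wall_rel [pred y | edge_label y == edge_label x] _ x);
  rewrite /= ?eqxx ?connect_root //.
by move=> a b /or4P[/eqP ->|/eqP ->|/edge_label_link ->|/edge_label_link <-];
  rewrite //= edge_label_e.
Qed.

Lemma face_wall_even W r :
  inner_face_rep e n o r -> ~~ odd #|[pred y | fconnect face r y && (wall y == W)]|.
Proof.
move=> face_r; have /andP[_ inner_r] := face_r.
rewrite card_fconnect_count /orbit inner_quad //.
have face4 : face (face (face (face r))) = r.
  by have := iter_order (@face_inj _ e n) r; rewrite inner_quad.
have inner_iter k : inner (iter k face r).
  apply: contra inner_r => o_r; apply: connect_trans o_r _.
  by rewrite fconnect_face_sym fconnect_iter.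
have adj_col x : vcol (tail x) != vcol (tail (face x)).
  by apply: c_proper; apply/existsP; exists x; rewrite tail_face !eqxx.
have center_col k : vcol (tail (iter k face r)) != c (inr (exist _ r face_r)).
  by apply: c_proper; apply/existsP; exists (iter k face r); rewrite fconnect_iter eqxx.
have link k : vcol (tail (iter k face r)) = vcol (tail (iter k.+2 face r)) ->
    wall (iter k.+1 face r) = wall (iter k face r).
  by move=> col_k; apply: wall_eq; rewrite /wall_rel /face_link inner_iter col_k !eqxx !orbT.
have adj3 := adj_col (face (face (face r))); rewrite face4 in adj3.
have := quad_opposite_colors (adj_col r) (adj_col (face r)) (adj_col (face (face r))) adj3
  (center_col 0%N) (center_col 1%N) (center_col 2%N) (center_col 3%N).
case/orP=> /eqP col_eq /=.
- rewrite (link 0%N col_eq) (link 2%N) /=; last by rewrite face4 col_eq.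
  by case: (wall r == W); case: (wall (face (face r)) == W).
- have w3 := link 3%N; rewrite /= face4 in w3.
  rewrite (link 1%N col_eq) -(w3 (esym col_eq)).
  by case: (wall r == W); case: (wall (face r) == W).
Qed.

Lemma exists_wall_side W : exists s : {ffun V -> bool},
  [forall x, (s (tail x) != s (tail (e x))) == (wall x == W)].
Proof.
have [|s sE] := even_faces_cut (o := o) map_simple map_rot map_connected map_euler
  (X := [pred y | wall y == W]) _ (fun r face_r => face_wall_even W face_r).
  by move=> x; rewrite /= wall_e.
by exists (finfun s); apply/forallP => x; rewrite !ffunE sE.
Qed.

Definition wall_side (W : D) : V -> bool := xchoose (exists_wall_side W).

Lemma wall_side_flip W x :
  (wall_side W (tail x) != wall_side W (tail (e x))) = (wall x == W).
Proof. by have /forallP /(_ x) /eqP := xchooseP (exists_wall_side W). Qed.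

Lemma wall_side_eq W a b : wall a = wall b -> W != wall a ->
  wall_side W (tail a) = wall_side W (tail b).
Proof.
move=> ab_wall W_a.
have keep z : wall z = wall a -> wall_side W (tail (e z)) = wall_side W (tail z).
  by move=> z_wall; apply/eqP/negPn; rewrite eq_sym wall_side_flip z_wall eq_sym (negbTE W_a).
pose S := [pred y | (wall y == wall a) && (wall_side W (tail y) == wall_side W (tail a))].
suff /andP[_ /eqP //] : S b.
apply: (connect_forward (S := S)) (introT (fingraph.rootP wall_sym) ab_wall) _.
  move=> x y xy /andP[/eqP x_wall /eqP x_side]; have y_wall := wall_eq xy.
  rewrite /S /= y_wall x_wall eqxx -x_side /=; apply/eqP.
  case/or4P: xy => [/eqP ->|/eqP ->|/and3P[_ /eqP -> _]|/and3P[_ /eqP -> _]].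
  - exact: keep.
  - by rewrite keep // y_wall.
  - by rewrite tail_face keep.
  - by rewrite tail_face keep // y_wall.
by rewrite /= !eqxx.
Qed.

Lemma outer_boundary_wall_walk (h : V -> bool) (phi : V -> bool * bool) g :
  (forall v, v \in outer_boundary tail e n o -> c (inl v) = phi v) ->
  cycle_hom (outer_boundary tail e n o) (fun v => @hueG V D e n o h (inl v)) phi g ->
  wall_walk (g \o tail) wall (fun x W => wall_side W (tail x)) edge_label (orbit face o).
Proof.
move=> c_phi /andP[g_cycle g_ok].
have g_col x : x \in orbit face o -> colT (g (tail x)) = vcol (tail x).
  move=> ox; have tx : tail x \in outer_boundary tail e n o by apply: map_f.
  by have /andP[_ /eqP ->] := allP g_ok _ tx; rewrite /vcol c_phi.
split.
- have adj_cycle : cycle (fun x y => adjT (g (tail x)) (g (tail y))) (orbit face o).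
    by move: g_cycle; rewrite /outer_boundary cycle_map.
  have := cycle_orbit (@face_inj _ e n) o.
  rewrite -[cycle (frel face) _]andbT -adj_cycle -cycle_relI.
  apply: sub_in_cycle (allss _) => x y ox oy /andP[/eqP xy adj_xy].
  rewrite /crossing /= adj_xy (g_col x ox) (g_col y oy) edge_label_wall -xy.
  rewrite /edge_label tail_face eqxx; apply/forallP => W.
  by rewrite wall_side_flip.
- apply/allP => x ox; have tx : tail x \in outer_boundary tail e n o by apply: map_f.
  by have /andP[/eqP hx _] := allP g_ok _ tx; rewrite /= hx /hueG; case: (h (tail x)).
- by move=> x y _ _ xy W; apply: wall_side_eq.
Qed.

End PatchColoring.

Theorem corollary22 (V D : finType) (tail : D -> V) (e n : {perm D}) (o : D)
  (h : V -> bool) (phi : V -> bool * bool) :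
  near_quadrangulation tail e n o ->
  (forall u v : V, adjH tail e u v -> h u != h v) ->
  viable_on_cycle (outer_boundary tail e n o)
    (fun v => @hueG V D e n o h (inl v)) phi ->
  (exists c : GV V e n o -> bool * bool,
      four_coloring (@adjG V D tail e n o) c /\
      forall v, v \in outer_boundary tail e n o -> c (inl v) = phi v) ->
  null_homotopic_on_cycle (outer_boundary tail e n o)
    (fun v => @hueG V D e n o h (inl v)) phi.
Proof.
move=> [simple rot two_conn euler quad] _ _ [c [c_proper c_phi]] g g_hom.
have walk := outer_boundary_wall_walk simple rot (two_connected_connect two_conn) euler
  quad c_proper c_phi g_hom.
by rewrite /outer_boundary -map_comp; apply: wall_walk_null_homotopic walk.
Qed.
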